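(* For any $g\ge2$, $n\ge1$ and any $a_1,\dots,a_n\in\mathbb{Z}_{\ge0}$ with $a_1+\cdots+a_n=2g-3+n$, $$P_{g,n+1}(a_1,\dots,a_n,1)=(2n-2)\,P_{g,n}(a_1,\dots,a_n).$$ In particular $P_{g,2}(2g-2,1)=0$, and for $n\ge2$ the vanishing of $P_{g,n}(a_1,\dots,a_n)$ implies the vanishing of $P_{g,n+1}(a_1,\dots,a_n,1)$.
   Context: For $g\ge2$, $m\ge1$, $$P_{g,m}(a_1,\dots,a_m):=\sum_{k=1}^m\frac{(-1)^k(2g-3+k)!}{k!}\sum_{(I_1,\dots,I_k)}\ \sum_{\substack{d_1,\dots,d_k\in\mathbb{Z}_{\ge0}\\ d_1+\cdots+d_k=g-2+m}}\prod_{j=1}^k\binom{2a_{[I_j]}+1}{2d_j}\prod_{i=1}^{|I_j|-1}(2d_j+1-2i),$$ where $(I_1,\dots,I_k)$ runs over ordered $k$-tuples of nonempty pairwise disjoint subsets of $\{1,\dots,m\}$ with union $\{1,\dots,m\}$, $a_{[I]}:=\sum_{\ell\in I}a_\ell$, and $\binom{x}{r}$ is the usual binomial coefficient (zero if $r>x$). *)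

From HB Require Import structures.
From mathcomp Require Import all_boot all_order all_algebra.
Set Implicit Arguments. Unset Strict Implicit. Unset Printing Implicit Defensive.
Import Order.TTheory GRing.Theory Num.Theory.
Local Open Scope ring_scope.

(* a_[I] for a : seq nat indexed by 'I_m (m = size a); entry l is nth 0 a l *)
Definition asum (m : nat) (a : seq nat) (I : {set 'I_m}) : nat :=
  (\sum_(l in I) nth 0 a l)%N.

Definition ordered_partition (m k : nat) (I : {ffun 'I_k -> {set 'I_m}}) : bool :=
  [&& [forall j, I j != set0],
      [forall j1, forall j2, (j1 != j2) ==> [disjoint I j1 & I j2]] &
      (\bigcup_(j < k) I j == setT)].

Definition blockterm (m : nat) (a : seq nat) (I : {set 'I_m}) (d : nat) : int :=
  ('C((2 * asum a I)%N.+1, (2 * d)%N))%:Z *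
  \prod_(1 <= i < #|I|) ((2 * d + 1)%N%:Z - (2 * i)%N%:Z).

(* P_{g,m}(a_1,...,a_m) with m = size a.  The d_j range over nonnegative
   integers summing to g-2+m, hence each d_j < g-1+m. *)
Definition P (g : nat) (a : seq nat) : int :=
  let m := size a in
  \sum_(1 <= k < m.+1)
    ((-1) ^+ k * ((2 * g - 3 + k)`! %/ k`!)%N%:Z *
     \sum_(I : {ffun 'I_k -> {set 'I_m}} | ordered_partition I)
       \sum_(d : {ffun 'I_k -> 'I_(g - 1 + m)} |
               (\sum_(j < k) (d j : nat))%N == (g - 2 + m)%N)
         \prod_(j < k) blockterm a (I j) (d j)).

From HB Require Import structures.
From mathcomp Require Import all_boot all_order all_algebra.
From mathcomp Require Import ring zify.
Import Order.TTheory GRing.Theory Num.Theory.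
Local Open Scope ring_scope.
Set Implicit Arguments. Unset Strict Implicit.

(* 1. A block I with a_[I] = A and |I| = s contributes the generating
      polynomial Psi_{A,s}(x) = sum_d binom(2A+1,2d) prod_{i<s}(2d+1-2i) x^d,
      and P_{g,m} = sum_k c_{g,k} W_k(g-2+m), where W_k(n) is the sum over
      ordered partitions into k blocks of [x^n] prod_j Psi_{A_j,s_j}.
   2. Putting the new point into an existing block maps Psi_{A,s} to
      Psi_{A+1,s+1} = L_{4A+3,1-2s} Psi_{A,s}, for the first order operator
      L_{U,V} p = (Ux + V) p + 2x(1-x) p'.  Since L is a derivation up to its
      multiplicative part, summing over the block that receives the point
      turns prod_j Psi_j into L_{sum U_j, sum V_j} (prod_j Psi_j).
   3. Splitting the ordered partitions of {1..m+1} according to whether the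
      new point is a singleton block (factor Psi_{1,1} = 1 + 3x) or joins a
      block gives a linear recurrence for W_k, and the recurrence
      (k+1) c_{g,k+1} = -(2g-2+k) c_{g,k} telescopes the outer sum. *)

Definition oddprod (d s : nat) : int :=
  \prod_(1 <= i < s) ((2 * d + 1)%N%:Z - (2 * i)%N%:Z).

Definition blockcoef (A s d : nat) : int :=
  ('C((2 * A)%N.+1, (2 * d)%N))%:Z * oddprod d s.

Lemma blockcoef_gt A s d : (A < d)%N -> blockcoef A s d = 0.
Proof. by move=> ltAd; rewrite /blockcoef bin_small ?mul0r //; lia. Qed.

Lemma oddprodSr d s : (0 < s)%N ->
  oddprod d s.+1 = oddprod d s * ((2 * d + 1)%N%:Z - (2 * s)%N%:Z).
Proof. by move=> s_gt0; rewrite /oddprod big_nat_recr. Qed.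

Lemma oddprodSS d s : (0 < s)%N ->
  oddprod d.+1 s.+1 = (2 * d + 1)%N%:Z * oddprod d s.
Proof.
case: s => // s _; rewrite /oddprod big_nat_recl //; congr (_ * _).
  by rewrite !PoszD !PoszM; ring.
by apply: eq_bigr => i _; rewrite !PoszD !PoszM; ring.
Qed.

Lemma binSS n k : 'C(n.+2, k.+2) = ('C(n, k.+2) + 2 * 'C(n, k.+1) + 'C(n, k))%N.
Proof. by rewrite !binS; lia. Qed.

(* The ratio of consecutive binomial coefficients, over the integers (so that
   it also holds when k exceeds n). *)
Lemma mul_bin_leftz n k :
  k.+1%:Z * ('C(n, k.+1))%:Z = (n%:Z - k%:Z) * ('C(n, k))%:Z.
Proof.
have [le_kn|lt_nk] := leqP k n.
  by rewrite subzn // -!PoszM mul_bin_left.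
by rewrite !bin_small ?mulr0 //; lia.
Qed.

(* The coefficient recurrence behind adding one point of weight one to a
   nonempty block: (A, s) becomes (A + 1, s + 1). *)
Lemma blockcoef_rec A s d : (0 < s)%N ->
  blockcoef A.+1 s.+1 d.+1 =
    ((4 * A + 3)%N%:Z - (2 * d)%N%:Z) * blockcoef A s d +
    ((2 * d + 3)%N%:Z - (2 * s)%N%:Z) * blockcoef A s d.+1.
Proof.
move=> s_gt0; rewrite /blockcoef (oddprodSS _ s_gt0).
set Q := oddprod d s; set Q' := oddprod d.+1 s.
have shiftQ : Q' * ((2 * d + 3)%N%:Z - (2 * s)%N%:Z) = (2 * d + 1)%N%:Z * Q.
  rewrite -oddprodSS // oddprodSr //; congr (_ * (_ - _)).
  by rewrite !PoszD !PoszM; ring.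
have pascal : 'C((2 * A.+1).+1, 2 * d.+1) = ('C((2 * A).+1, 2 * d.+1) +
    2 * 'C((2 * A).+1, (2 * d).+1) + 'C((2 * A).+1, 2 * d))%N.
  have -> : (2 * A.+1).+1 = (2 * A).+3 by lia.
  have -> : (2 * d.+1)%N = (2 * d).+2 by lia.
  exact: binSS.
have ratio : (2 * d + 1)%N%:Z * ('C((2 * A).+1, (2 * d).+1))%:Z =
    ((2 * A + 1)%N%:Z - (2 * d)%N%:Z) * ('C((2 * A).+1, 2 * d))%:Z.
  by rewrite !addn1 mul_bin_leftz.
rewrite pascal.
move: ('C(_, 2 * d.+1)) ('C(_, (2 * d).+1)) ('C(_, 2 * d)) ratio => b2 b1 b0 ratio.
(* The difference of both sides is a combination of ratio and shiftQ. *)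
apply/eqP; rewrite -subr_eq0; apply/eqP.
transitivity (2 * Q * ((2 * d + 1)%N%:Z * b1%:Z - ((2 * A + 1)%N%:Z - (2 * d)%N%:Z) * b0%:Z)
  - b2%:Z * (Q' * ((2 * d + 3)%N%:Z - (2 * s)%N%:Z) - (2 * d + 1)%N%:Z * Q)).
  by rewrite !PoszD; ring.
by rewrite ratio shiftQ !subrr !mulr0 subrr.
Qed.

Lemma blockcoef_rec0 A s : (0 < s)%N ->
  blockcoef A.+1 s.+1 0 = (1 - (2 * s)%N%:Z) * blockcoef A s 0.
Proof.
by move=> s_gt0; rewrite /blockcoef !muln0 !bin0 !mul1r oddprodSr // mulrC.
Qed.

Section PolyFacts.
Variable R : comNzRingType.
Implicit Types (p q : {poly R}) (U V : R).

Definition diffop U V p : {poly R} :=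
  (U%:P * 'X + V%:P) * p + 2%:P * 'X * (1 - 'X) * p^`().

Lemma coef_derivMX p i : (p^`() * 'X)`_i = p`_i *+ i.
Proof. by rewrite coefMX; case: i => [|i] //=; rewrite coef_deriv. Qed.

Lemma diffopE U V p : diffop U V p =
  U%:P * (p * 'X) + V%:P * p + 2%:P * (p^`() * 'X) - 2%:P * (p^`() * 'X * 'X).
Proof. by rewrite /diffop; ring. Qed.

Lemma coef_diffop0 U V p : (diffop U V p)`_0 = V * p`_0.
Proof.
by rewrite diffopE coefB !coefD !coefCM !coefMX /= !mulr0 add0r addr0 subr0.
Qed.

Lemma coef_diffopS U V p n :
  (diffop U V p)`_n.+1 = (U - (2 * n)%:R) * p`_n + (V + (2 * n.+1)%:R) * p`_n.+1.
Proof.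
rewrite diffopE coefB !coefD !coefCM (coefMX (p^`() * 'X)) !coef_derivMX coefMX /=.
by rewrite -[_ *+ n.+1]mulr_natr -[_ *+ n]mulr_natr !natrM; ring.
Qed.

Lemma deriv_prod k (p : 'I_k -> {poly R}) :
  (\prod_(j < k) p j)^`() = \sum_(j < k) (p j)^`() * \prod_(i < k | i != j) p i.
Proof.
elim: k p => [|k IHk] p; first by rewrite !big_ord0 derivC.
rewrite big_ord_recl derivM IHk big_ord_recl mulr_sumr; congr (_ + _).
  by rewrite [in RHS]big_mkcond big_ord_recl /= mul1r.
apply: eq_bigr => j _; rewrite mulrCA; congr (_ * _).
rewrite [RHS]big_mkcond big_ord_recl /= big_mkcond.
by congr (_ * _); apply: eq_bigr => i _; rewrite (inj_eq lift_inj).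
Qed.

Lemma prod_replace k (p : 'I_k -> {poly R}) q (j : 'I_k) :
  \prod_(i < k) (if i == j then q else p i) = q * \prod_(i < k | i != j) p i.
Proof.
rewrite (bigD1 j) //= eqxx; congr (_ * _).
by apply: eq_bigr => i /negbTE ->.
Qed.

Lemma sum_replace_diffop k (p q : 'I_k -> {poly R}) (u v : 'I_k -> R) :
  (forall j, q j = diffop (u j) (v j) (p j)) ->
  \sum_(j < k) \prod_(i < k) (if i == j then q i else p i) =
  diffop (\sum_(j < k) u j) (\sum_(j < k) v j) (\prod_(j < k) p j).
Proof.
move=> qE; set Pi := \prod_(j < k) p j.
have splitPi j : Pi = p j * \prod_(i < k | i != j) p i by rewrite /Pi (bigD1 j).
transitivity (\sum_(j < k) (((u j)%:P * 'X + (v j)%:P) * Pi +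
    2%:P * 'X * (1 - 'X) * ((p j)^`() * \prod_(i < k | i != j) p i))).
  apply: eq_bigr => j _; rewrite (eq_bigr (fun i => if i == j then q j else p i)).
    by rewrite prod_replace qE /diffop (splitPi j); ring.
  by move=> i _; case: eqP => [->|].
rewrite big_split /= -mulr_suml -mulr_sumr -deriv_prod /diffop.
by rewrite big_split /= -mulr_suml !rmorph_sum.
Qed.

Lemma coef_prod_poly k M (c : 'I_k -> nat -> R) N :
  (\prod_(j < k) \poly_(i < M) c j i)`_N =
  \sum_(d : {ffun 'I_k -> 'I_M} | (\sum_(j < k) (d j : nat))%N == N)
     \prod_(j < k) c j (d j).
Proof.
under eq_bigr do rewrite poly_def.
rewrite bigA_distr_bigA /= coef_sum [RHS]big_mkcond /=.
apply: eq_bigr => f _.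
have -> : \prod_(j < k) (c j (f j) *: 'X^(f j)) =
    (\prod_(j < k) c j (f j)) *: 'X^(\sum_(j < k) (f j : nat)).
  rewrite -mul_polyC rmorph_prod -prodrXr -big_split /=.
  by apply: eq_bigr => j _; rewrite mul_polyC.
by rewrite coefZ coefXn eq_sym; case: eqP => _; rewrite ?mulr1 ?mulr0.
Qed.

Lemma coef_prod_trunc k (p q : 'I_k -> {poly R}) N :
  (forall j i, (i <= N)%N -> (p j)`_i = (q j)`_i) ->
  (\prod_(j < k) p j)`_N = (\prod_(j < k) q j)`_N.
Proof.
move=> pq; suff : forall n, (n <= N)%N ->
  (\prod_(j < k) p j)`_n = (\prod_(j < k) q j)`_n by apply.
apply: (big_ind2 (fun x y : {poly R} => forall n, (n <= N)%N -> x`_n = y`_n)) => //.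
  move=> x1 x2 y1 y2 x12 y12 n le_nN; rewrite !coefM; apply: eq_bigr => i _.
  by rewrite x12 ?y12 // (leq_trans _ le_nN) // ?leq_subr // -ltnS.
by move=> j _ n le_nN; apply: pq.
Qed.

End PolyFacts.

Definition block_poly (A s : nat) : {poly int} := \poly_(d < A.+1) blockcoef A s d.

Lemma coef_block_poly A s d : (block_poly A s)`_d = blockcoef A s d.
Proof. by rewrite coef_poly; case: ltnP => // le_Ad; rewrite blockcoef_gt. Qed.

Lemma block_poly_rec A s : (0 < s)%N ->
  block_poly A.+1 s.+1 =
  diffop (4 * A + 3)%N%:Z (1 - (2 * s)%N%:Z) (block_poly A s).
Proof.
move=> s_gt0; apply/polyP => -[|d].
  by rewrite coef_diffop0 !coef_block_poly blockcoef_rec0.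
rewrite coef_diffopS !coef_block_poly blockcoef_rec // !natz.
by congr (_ + _ * _); rewrite !PoszD; ring.
Qed.

Lemma block_poly11 : block_poly 1 1 = 1 + 3%:P * 'X.
Proof.
apply/polyP => -[|[|d]]; rewrite coef_block_poly coefD coef1 coefCM coefX.
1,2: by rewrite /blockcoef /oddprod big_geq.
by rewrite blockcoef_gt.
Qed.

Lemma ordered_partitionP m k (I : {ffun 'I_k -> {set 'I_m}}) :
  reflect [/\ forall j, I j != set0,
              forall j1 j2 x, x \in I j1 -> x \in I j2 -> j1 = j2
            & forall x, exists j, x \in I j]
          (ordered_partition I).
Proof.
apply: (iffP and3P) => [[/forallP nz /forallP dis /eqP cov]|[nz dis cov]]; split.
- exact: nz.
- move=> j1 j2 x x1 x2; apply/eqP/negPn/negP => /(implyP (forallP (dis j1) j2)).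
  by rewrite -setI_eq0 => /eqP/setP/(_ x); rewrite !inE x1 x2.
- move=> x; have : x \in \bigcup_(j < k) I j by rewrite cov inE.
  by case/bigcupP => j _ xj; exists j.
- by apply/forallP.
- apply/forallP => j1; apply/forallP => j2; apply/implyP => ne12.
  rewrite -setI_eq0; apply/eqP/setP => x; rewrite !inE.
  by apply/negbTE/andP => -[x1 x2]; move: ne12; rewrite (dis _ _ _ x1 x2) eqxx.
- apply/eqP/setP => x; rewrite inE; have [j xj] := cov x.
  by apply/bigcupP; exists j.
Qed.

Lemma partition_sum m k (I : {ffun 'I_k -> {set 'I_m}}) (F : 'I_m -> nat) :
  ordered_partition I -> (\sum_(j < k) \sum_(x in I j) F x = \sum_(x < m) F x)%N.
Proof.
case/ordered_partitionP => _ dis cov.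
rewrite (exchange_big_dep xpredT) //=; apply: eq_bigr => x _.
have [j0 xj0] := cov x; rewrite (big_pred1 j0) // => j /=.
by apply/idP/eqP => [xj|->//]; exact: dis xj xj0.
Qed.

Lemma partition_card m k (I : {ffun 'I_k -> {set 'I_m}}) :
  ordered_partition I -> (\sum_(j < k) #|I j|)%N = m.
Proof.
move/(partition_sum (fun _ => 1%N)); rewrite sum_nat_const card_ord muln1.
by apply: etrans; apply: eq_bigr => j _; rewrite sum1_card.
Qed.

Lemma partition_asum m (a : seq nat) k (I : {ffun 'I_k -> {set 'I_m}}) :
  size a = m -> ordered_partition I -> (\sum_(j < k) asum a (I j))%N = sumn a.
Proof.
move=> size_a /(partition_sum (nth 0 a)) ->; subst m.
by rewrite sumnE (big_nth 0) big_mkord.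
Qed.

Lemma partition_le m k (I : {ffun 'I_k -> {set 'I_m}}) :
  ordered_partition I -> (k <= m)%N.
Proof.
move=> partI; apply: (@leq_trans (\sum_(j < k) #|I j|)); last first.
  by rewrite (partition_card partI).
rewrite -[X in (X <= _)%N]card_ord -sum1_card.
by apply: leq_sum => j _; rewrite card_gt0; case/ordered_partitionP: partI.
Qed.

Lemma partition0 m (I : {ffun 'I_0 -> {set 'I_m}}) :
  (0 < m)%N -> ~~ ordered_partition I.
Proof.
by move=> m_gt0; apply/ordered_partitionP => -[_ _ /(_ (Ordinal m_gt0)) [[]]].
Qed.

(* The points of {1..m} are identified with those of {1..m+1} other than the
   new point ord_max via lift ord_max. *)
Section NewPoint.
Variable m : nat.
Implicit Types (Y : {set 'I_m}) (X : {set 'I_m.+1}).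

Definition lift_set Y : {set 'I_m.+1} := [set lift ord_max y | y in Y].
Definition unlift_set X : {set 'I_m} := [set y | lift ord_max y \in X].

Lemma in_lift_set Y y : (lift ord_max y \in lift_set Y) = (y \in Y).
Proof. by rewrite mem_imset //; exact: lift_inj. Qed.

Lemma max_lift_set Y : (ord_max \in lift_set Y) = false.
Proof.
apply/negbTE/imsetP => -[y _ maxE].
by move: (neq_lift (@ord_max m) y); rewrite -maxE eqxx.
Qed.

Lemma in_set1max y : (lift ord_max y \in [set @ord_max m]) = false.
Proof. by rewrite inE eq_sym (negbTE (neq_lift _ _)). Qed.

Lemma lift_set0 : lift_set set0 = set0.
Proof. exact: imset0. Qed.

Lemma lift_setK : cancel lift_set unlift_set.
Proof. by move=> Y; apply/setP => y; rewrite inE in_lift_set. Qed.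

Lemma unlift_setU1 X : unlift_set (ord_max |: X) = unlift_set X.
Proof. by apply/setP => y; rewrite !inE eq_sym (negbTE (neq_lift _ _)). Qed.

Lemma unlift_setK X : ord_max \notin X -> lift_set (unlift_set X) = X.
Proof.
move=> maxX; apply/setP => x; case: (unliftP ord_max x) => [y ->|->].
  by rewrite in_lift_set inE.
by rewrite max_lift_set (negbTE maxX).
Qed.

Lemma card_lift_set Y : #|lift_set Y| = #|Y|.
Proof. by rewrite card_imset //; exact: lift_inj. Qed.

Lemma asum_lift_set (a : seq nat) Y : size a = m ->
  asum (rcons a 1%N) (lift_set Y) = asum a Y.
Proof.
move=> size_a; rewrite /asum big_imset /=; last by move=> x y _ _; exact: lift_inj.
by apply: eq_bigr => y _ /=; rewrite /bump leqNgt ltn_ord add0n nth_rcons size_a ltn_ord.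
Qed.

Lemma asum_max (a : seq nat) : size a = m -> asum (rcons a 1%N) [set @ord_max m] = 1%N.
Proof. by move=> size_a; rewrite /asum big_set1 nth_rcons /= size_a ltnn eqxx. Qed.

End NewPoint.

Section JoinNew.
Variables m k : nat.
Implicit Types (I : {ffun 'I_k -> {set 'I_m}}) (J : {ffun 'I_k -> {set 'I_m.+1}}).

Definition join_new (j : 'I_k) I : {ffun 'I_k -> {set 'I_m.+1}} :=
  [ffun i => if i == j then ord_max |: lift_set (I i) else lift_set (I i)].

Definition drop_new J : {ffun 'I_k -> {set 'I_m}} := [ffun i => unlift_set (J i)].

Lemma in_join_new j I i y : (lift ord_max y \in join_new j I i) = (y \in I i).
Proof.
rewrite ffunE; case: eqP => _; last exact: in_lift_set.
by rewrite !inE eq_sym (negbTE (neq_lift _ _)) in_lift_set.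
Qed.

Lemma max_join_new j I i : (ord_max \in join_new j I i) = (i == j).
Proof. by rewrite ffunE; case: eqP => _; rewrite ?max_lift_set // !inE eqxx. Qed.

Lemma join_newK j : cancel (join_new j) drop_new.
Proof.
move=> I; apply/ffunP => i; rewrite !ffunE.
by case: eqP => _; rewrite ?unlift_setU1 lift_setK.
Qed.

Lemma drop_newK j J : ordered_partition J -> ord_max \in J j ->
  join_new j (drop_new J) = J.
Proof.
case/ordered_partitionP => _ dis _ maxJ; apply/ffunP => i; rewrite !ffunE.
case: eqP => [->|ne_ij]; last first.
  by rewrite unlift_setK //; apply/negP => maxJi; apply: ne_ij; exact: dis maxJi maxJ.
have -> : unlift_set (J j) = unlift_set (J j :\ ord_max).
  by rewrite -[RHS]unlift_setU1 setD1K.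
by rewrite unlift_setK ?setD11 // setD1K.
Qed.

Lemma join_new_partition j I :
  ordered_partition (join_new j I) && (join_new j I j != [set ord_max]) =
  ordered_partition I.
Proof.
apply/andP/ordered_partitionP => [[/ordered_partitionP[nz dis cov] ne_max]|[nz dis cov]].
  split.
  - move=> i; apply: contraNneq (nz i) => Ii0; rewrite ffunE Ii0 lift_set0 setU0.
    case: (i =P j) => [ij|//]; move: ne_max.
    by rewrite ffunE eqxx -ij Ii0 lift_set0 setU0 eqxx.
  - by move=> j1 j2 y; rewrite -!(in_join_new j); apply: dis.
  - by move=> y; have [i] := cov (lift ord_max y); rewrite in_join_new; exists i.
have [y Ijy] := set0Pn _ (nz j); split; last first.
  by apply: contraTneq Ijy => Jj1; rewrite -(in_join_new j) Jj1 in_set1max.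
apply/ordered_partitionP; split.
- move=> i; have [z Iiz] := set0Pn _ (nz i).
  by apply/set0Pn; exists (lift ord_max z); rewrite in_join_new.
- move=> j1 j2 x; case: (unliftP ord_max x) => [z ->|->].
    by rewrite !in_join_new; apply: dis.
  by rewrite !max_join_new => /eqP -> /eqP ->.
- move=> x; case: (unliftP ord_max x) => [z ->|->]; last by exists j; rewrite max_join_new.
  by have [i] := cov z; exists i; rewrite in_join_new.
Qed.

Lemma sum_join_new (V : nmodType) j (F : {ffun 'I_k -> {set 'I_m.+1}} -> V) :
  \sum_(J | (ordered_partition J && (ord_max \in J j)) && ~~ (J j == [set ord_max])) F J
  = \sum_(I | ordered_partition I) F (join_new j I).
Proof.
rewrite (reindex_onto (join_new j) drop_new) /=; last first.
  by move=> J /andP[/andP[partJ maxJ] _]; apply: drop_newK.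
apply: eq_bigl => I; rewrite join_newK eqxx andbT max_join_new eqxx andbT.
exact: join_new_partition.
Qed.

End JoinNew.

Section AddSingleton.
Variables m k : nat.
Implicit Types (I : {ffun 'I_k -> {set 'I_m}}) (J : {ffun 'I_k.+1 -> {set 'I_m.+1}}).

Definition add_singleton (j : 'I_k.+1) I : {ffun 'I_k.+1 -> {set 'I_m.+1}} :=
  [ffun i => if unlift j i is Some i0 then lift_set (I i0) else [set ord_max]].

Definition remove_block (j : 'I_k.+1) J : {ffun 'I_k -> {set 'I_m}} :=
  [ffun i0 => unlift_set (J (lift j i0))].

Lemma add_singleton_lift j I i0 : add_singleton j I (lift j i0) = lift_set (I i0).
Proof. by rewrite ffunE liftK. Qed.

Lemma add_singleton_new j I : add_singleton j I j = [set ord_max].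
Proof. by rewrite ffunE unlift_none. Qed.

Lemma add_singletonK j : cancel (add_singleton j) (remove_block j).
Proof. by move=> I; apply/ffunP => i0; rewrite ffunE add_singleton_lift lift_setK. Qed.

Lemma remove_blockK j J : ordered_partition J -> J j = [set ord_max] ->
  add_singleton j (remove_block j J) = J.
Proof.
case/ordered_partitionP => _ dis _ Jj; apply/ffunP => i.
case: (unliftP j i) => [i0 ->|->]; last by rewrite add_singleton_new Jj.
rewrite add_singleton_lift ffunE unlift_setK //; apply/negP => maxJ.
have := dis (lift j i0) j ord_max maxJ; rewrite Jj set11 => /(_ isT) ij.
by move: (neq_lift j i0); rewrite ij eqxx.
Qed.

Lemma add_singleton_partition j I :
  ordered_partition (add_singleton j I) = ordered_partition I.
Proof.
apply/ordered_partitionP/ordered_partitionP => -[nz dis cov]; split.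
- move=> i0; apply: contraNneq (nz (lift j i0)) => Ii0.
  by rewrite add_singleton_lift Ii0 lift_set0.
- move=> j1 j2 y y1 y2; apply: (@lift_inj _ j).
  by apply: (dis _ _ (lift ord_max y)); rewrite add_singleton_lift in_lift_set.
- move=> y; have [i] := cov (lift ord_max y).
  case: (unliftP j i) => [i0 ->|->]; last by rewrite add_singleton_new in_set1max.
  by rewrite add_singleton_lift in_lift_set; exists i0.
- move=> i; case: (unliftP j i) => [i0 ->|->]; last first.
    by rewrite add_singleton_new; apply/set0Pn; exists ord_max; rewrite set11.
  have [y Iy] := set0Pn _ (nz i0); apply/set0Pn.
  by exists (lift ord_max y); rewrite add_singleton_lift in_lift_set.
- move=> j1 j2 x; case: (unliftP j j1) => [i1 ->|->]; case: (unliftP j j2) => [i2 ->|->];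
    rewrite ?add_singleton_lift ?add_singleton_new //.
  + case: (unliftP ord_max x) => [y ->|->]; rewrite ?in_lift_set ?max_lift_set //.
    by move=> y1 y2; rewrite (dis _ _ _ y1 y2).
  + by move=> x1 /set1P xmax; move: x1; rewrite xmax max_lift_set.
  + by move=> /set1P ->; rewrite max_lift_set.
- move=> x; case: (unliftP ord_max x) => [y ->|->]; last first.
    by exists j; rewrite add_singleton_new set11.
  by have [i0] := cov y; exists (lift j i0); rewrite add_singleton_lift in_lift_set.
Qed.

Lemma sum_add_singleton (V : nmodType) j (F : {ffun 'I_k.+1 -> {set 'I_m.+1}} -> V) :
  \sum_(J | (ordered_partition J && (ord_max \in J j)) && (J j == [set ord_max])) F J
  = \sum_(I | ordered_partition I) F (add_singleton j I).
Proof.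
rewrite (reindex_onto (add_singleton j) (remove_block j)) /=; last first.
  by move=> J /andP[/andP[partJ _] /eqP Jj]; apply: remove_blockK.
apply: eq_bigl => I; rewrite add_singletonK add_singleton_new set11 !eqxx !andbT.
exact: add_singleton_partition.
Qed.

End AddSingleton.

Lemma sum_partitionsS (V : nmodType) m k (F : {ffun 'I_k.+1 -> {set 'I_m.+1}} -> V) :
  \sum_(J | ordered_partition J) F J =
  \sum_(j < k.+1)
    (\sum_(I : {ffun 'I_k -> {set 'I_m}} | ordered_partition I) F (add_singleton j I)
   + \sum_(I : {ffun 'I_k.+1 -> {set 'I_m}} | ordered_partition I) F (join_new j I)).
Proof.
transitivity (\sum_(J | ordered_partition J) \sum_(j | ord_max \in J j) F J).
  apply: eq_bigr => J /ordered_partitionP[_ dis cov]; have [j0 maxj0] := cov ord_max.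
  rewrite (big_pred1 j0) // => j /=.
  by apply/idP/eqP => [maxj|->//]; exact: dis maxj maxj0.
rewrite (exchange_big_dep xpredT) //=; apply: eq_bigr => j _.
rewrite (bigID (fun J : {ffun 'I_k.+1 -> {set 'I_m.+1}} => J j == [set ord_max])) /=.
by rewrite sum_add_singleton sum_join_new.
Qed.

Definition block_prod m (a : seq nat) k (I : {ffun 'I_k -> {set 'I_m}}) : {poly int} :=
  \prod_(j < k) block_poly (asum a (I j)) #|I j|.

Definition partition_coef m (a : seq nat) k n : int :=
  \sum_(I : {ffun 'I_k -> {set 'I_m}} | ordered_partition I) (block_prod a I)`_n.

Lemma partition_coef_gt m (a : seq nat) k n : (m < k)%N -> partition_coef m a k n = 0.
Proof.
move=> lt_mk; rewrite /partition_coef big1 // => I /partition_le.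
by rewrite leqNgt lt_mk.
Qed.

Lemma partition_coef0 m (a : seq nat) n : (0 < m)%N -> partition_coef m a 0 n = 0.
Proof. by move=> m_gt0; rewrite /partition_coef big_pred0 // => I; apply/negbTE/partition0. Qed.

Section NewPointOne.
Variables (m k : nat) (a : seq nat).
Hypothesis size_a : size a = m.

Lemma block_prod_add_singleton j (I : {ffun 'I_k -> {set 'I_m}}) :
  block_prod (rcons a 1%N) (add_singleton j I) = (1 + 3%:P * 'X) * block_prod a I.
Proof.
rewrite /block_prod (bigD1_ord j) //= add_singleton_new asum_max // cards1.
rewrite block_poly11; congr (_ * _); apply: eq_bigr => i _.
by rewrite add_singleton_lift asum_lift_set // card_lift_set.
Qed.

Lemma block_prod_join_new j (I : {ffun 'I_k -> {set 'I_m}}) :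
  block_prod (rcons a 1%N) (join_new j I) =
  \prod_(i < k) (if i == j then block_poly (asum a (I i)).+1 #|I i|.+1
                 else block_poly (asum a (I i)) #|I i|).
Proof.
apply: eq_bigr => i _; rewrite ffunE.
case: eqP => _; last by rewrite asum_lift_set // card_lift_set.
rewrite cardsU1 max_lift_set card_lift_set /asum big_setU1 ?max_lift_set //=.
by rewrite -/(asum _ _) asum_lift_set // nth_rcons size_a ltnn eqxx add1n.
Qed.

Lemma sum_block_prod_join_new (I : {ffun 'I_k -> {set 'I_m}}) n :
  ordered_partition I ->
  \sum_(j < k) (block_prod (rcons a 1%N) (join_new j I))`_n.+1 =
    ((4 * sumn a + 3 * k)%N%:Z - (2 * n)%N%:Z) * (block_prod a I)`_n
  + ((2 * n + 2 + k)%N%:Z - (2 * m)%N%:Z) * (block_prod a I)`_n.+1.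
Proof.
move=> partI; under eq_bigr do rewrite block_prod_join_new.
rewrite -coef_sum (@sum_replace_diffop _ _ _ _
  (fun i => (4 * asum a (I i) + 3)%N%:Z) (fun i => 1 - (2 * #|I i|)%N%:Z)); last first.
  by move=> j; apply: block_poly_rec; rewrite card_gt0; case/ordered_partitionP: partI.
have sumU : \sum_(i < k) (4 * asum a (I i) + 3)%N%:Z = (4 * sumn a + 3 * k)%N%:Z.
  rewrite -(big_morph Posz PoszD (erefl 0%:Z)); congr Posz.
  by rewrite big_split sum_nat_const card_ord -big_distrr partition_asum // mulnC.
have sumV : \sum_(i < k) (2 * #|I i|)%N%:Z = (2 * m)%N%:Z.
  by rewrite -(big_morph Posz PoszD (erefl 0%:Z)); congr Posz; rewrite -big_distrr partition_card.
rewrite coef_diffopS sumrB sumr_const card_ord sumU sumV !natz.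
by congr (_ * _ + _ * _); rewrite !PoszD; ring.
Qed.

End NewPointOne.

Lemma partition_coef_rec m (a : seq nat) k N : size a = m ->
  partition_coef m.+1 (rcons a 1%N) k.+1 N.+1 =
    k.+1%:Z * (partition_coef m a k N.+1 + 3 * partition_coef m a k N)
  + ((4 * sumn a + 3 * k.+1)%N%:Z - (2 * N)%N%:Z) * partition_coef m a k.+1 N
  + ((2 * N + 2 + k.+1)%N%:Z - (2 * m)%N%:Z) * partition_coef m a k.+1 N.+1.
Proof.
move=> size_a; rewrite /partition_coef sum_partitionsS big_split /= -addrA.
congr (_ + _).
  under eq_bigr do under eq_bigr do rewrite block_prod_add_singleton //.
  rewrite sumr_const card_ord -[_ *+ k.+1]mulr_natl natz; congr (_ * _).
  rewrite mulr_sumr -big_split /=; apply: eq_bigr => I _.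
  by rewrite mulrDl mul1r coefD -mulrA coefCM ['X * _]mulrC coefMX.
rewrite exchange_big /= !mulr_sumr -big_split /=; apply: eq_bigr => I partI.
exact: sum_block_prod_join_new.
Qed.

Definition outer_coef (g k : nat) : int := (-1) ^+ k * ((2 * g - 3 + k)`! %/ k`!)%N%:Z.

(* Step 1: P_{g,m} = sum_k c_{g,k} W_k(g-2+m); the range of the d_j in P is
   irrelevant since the blocks have degree less than g-1+m anyway. *)
Lemma P_partition_coef g (a : seq nat) m : (2 <= g)%N -> size a = m -> (0 < m)%N ->
  P g a = \sum_(k < m.+1) outer_coef g k * partition_coef m a k (g - 2 + m).
Proof.
move=> g_ge2 size_a m_gt0.
rewrite -(big_mkord xpredT (fun k => outer_coef g k * partition_coef m a k _)).
rewrite big_ltn // partition_coef0 // mulr0 add0r.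
rewrite /P size_a; apply: eq_bigr => k _; congr (_ * _); apply: eq_bigr => I _.
rewrite -(@coef_prod_poly _ k _ (fun j i => blockterm a (I j) i)) /block_prod.
apply: coef_prod_trunc => j i le_i; rewrite coef_poly coef_block_poly.
by case: ltnP => // le_bound; exfalso; lia.
Qed.

Lemma fact_divE L k : (k <= L)%N -> (L`! %/ k`! = 'C(L, k) * (L - k)`!)%N.
Proof. by move=> le_kL; rewrite -(bin_fact le_kL) mulnCA mulKn ?fact_gt0. Qed.

Lemma fact_div_rec L k : (k <= L)%N ->
  (L.+1`! %/ k.+1`! * k.+1 = L.+1 * (L`! %/ k`!))%N.
Proof.
move=> le_kL; rewrite !fact_divE // subSS mulnAC [('C(_, _) * _)%N]mulnC.
by rewrite -mul_bin_diag mulnA.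
Qed.

Lemma outer_coef_rec g k : (2 <= g)%N ->
  outer_coef g k.+1 * k.+1%:Z = - (2 * g - 2 + k)%N%:Z * outer_coef g k.
Proof.
move=> g_ge2; rewrite /outer_coef.
have -> : (2 * g - 3 + k.+1 = (2 * g - 3 + k).+1)%N by lia.
have -> : (2 * g - 2 + k = (2 * g - 3 + k).+1)%N by lia.
rewrite -mulrA -PoszM fact_div_rec; last by lia.
by rewrite PoszM exprS; ring.
Qed.

Lemma sum_shift (V : zmodType) n (T : nat -> V) : T 0%N = 0 -> T n.+1 = 0 ->
  \sum_(k < n.+1) T k.+1 = \sum_(k < n.+1) T k.
Proof.
move=> T0 Tn; transitivity (\sum_(k < n.+2) T k).
  by rewrite [RHS]big_ord_recl /= T0 add0r.
by rewrite [LHS]big_ord_recr /= Tn addr0.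
Qed.

(* The main identity: the recurrence for W_k, the recurrence for c_{g,k}
   and the constraint on sumn a make all terms except (2n-2) W_k(N) cancel. *)
Lemma P_rcons1 g n (a : seq nat) :
  (2 <= g)%N -> (1 <= n)%N -> size a = n -> sumn a = (2 * g - 3 + n)%N ->
  P g (rcons a 1%N) = (2 * n - 2)%N%:Z * P g a.
Proof.
case: g => [|[|G]] // _; case: n => [|n] // _ size_a sum_a.
set N := (G + n.+1)%N; set W := partition_coef n.+1 a.
(* T k gathers the terms of the recurrence for W_k that involve W_k itself;
   the terms involving W_{k-1} are rewritten with the recurrence for c_{g,k}. *)
set T := fun k => outer_coef G.+2 k *
  (((4 * sumn a + 3 * k)%N%:Z - (2 * N)%N%:Z) * W k N
   + ((2 * N + 2 + k)%N%:Z - (2 * n.+1)%N%:Z) * W k N.+1).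
have expand : P G.+2 (rcons a 1%N) = \sum_(k < n.+2)
    (- (2 * G + 2 + k)%N%:Z * outer_coef G.+2 k * (W k N.+1 + 3 * W k N) + T k.+1).
  rewrite (@P_partition_coef _ _ n.+2) ?size_rcons ?size_a // big_ord_recl /=.
  rewrite partition_coef0 // mulr0 add0r (_ : G.+2 - 2 + n.+2 = N.+1)%N; last by lia.
  apply: eq_bigr => k _; rewrite /bump add1n partition_coef_rec // -/W -addrA mulrDr.
  rewrite mulrA outer_coef_rec // (_ : 2 * G.+2 - 2 + k = 2 * G + 2 + k)%N //; lia.
(* T 0 and T (n+2) vanish: no partitions into 0 or into n+2 blocks. *)
rewrite expand big_split /= sum_shift; first last.
- by rewrite /T /W !partition_coef_gt // !mulr0 ?addr0 ?mulr0.
- by rewrite /T /W !partition_coef0 // !mulr0 ?addr0 ?mulr0.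
rewrite -big_split (@P_partition_coef _ _ n.+1) // mulr_sumr.
rewrite (_ : G.+2 - 2 + n.+1 = N)%N; last by lia.
apply: eq_bigr => k _ /=; rewrite /T sum_a /N (_ : 2 * n.+1 - 2 = 2 * n)%N; last by lia.
rewrite (_ : 2 * G.+2 - 3 + n.+1 = 2 * G + 2 + n)%N; last by lia.
by rewrite /W !PoszD !PoszM !intS; ring.
Qed.

Theorem corollary5p6 :
  (forall (g n : nat) (a : seq nat),
     (2 <= g)%N -> (1 <= n)%N -> size a = n -> sumn a = (2 * g - 3 + n)%N ->
     P g (rcons a 1%N) = (2 * n - 2)%N%:Z * P g a)
  /\ (forall g : nat, (2 <= g)%N -> P g [:: (2 * g - 2)%N; 1%N] = 0)
  /\ (forall (g n : nat) (a : seq nat),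
     (2 <= g)%N -> (2 <= n)%N -> size a = n -> sumn a = (2 * g - 3 + n)%N ->
     P g a = 0 -> P g (rcons a 1%N) = 0).
Proof.
split; first exact: P_rcons1.
split=> [g g_ge2 | g n a g_ge2 n_ge2 size_a sum_a Pa0].
  rewrite -[[:: _; _]]/(rcons [:: (2 * g - 2)%N] 1%N) (@P_rcons1 g 1) ?mul0r //=.
  by rewrite addn0; lia.
by rewrite (P_rcons1 g_ge2 _ size_a sum_a) ?Pa0 ?mulr0 //; lia.
Qed.
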